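(* Work in the projective model of $\mathbf{Sol}$ geometry described in the context. Let $P_1=(1,0,0,0)$, $P_2=(1,a,b,c)$ and $P_3=(1,d,e,f)$. For a point $P=(1,x,y,z)$ let $P^i=\mathbf{T}_P^{-1}(P_i)$, i.e. $P^1=(1,-xe^{z},-ye^{-z},-z)$, $P^2=(1,(a-x)e^{z},(b-y)e^{-z},c-z)$, $P^3=(1,(d-x)e^{z},(e-y)e^{-z},f-z)$. Then the translation-like triangular surface $S^{\mathbf{Sol},t}_{P_1,P_2,P_3}$ has the equation \[ 0=\mathbf{t}(P^1)\cdot\mathbf{t}(P^2)\cdot\mathbf{t}(P^3)=\frac{z(z-c)(z-f)}{(1-e^{-z})(e^z-e^c)(e^z-e^f)}\Big((e^z-1)(bde^f-aee^c)+(e^f-1)(aye^c-bxe^z)+(e^c-1)(exe^z-dye^f)\Big), \] where $\mathbf{t}(P^1)\cdot\mathbf{t}(P^2)\cdot\mathbf{t}(P^3)$ denotes the Euclidean triple product (determinant) of the three vectors.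
   Context: $\mathbf{Sol}$ is modelled on $\mathbb{R}^3$ with points in homogeneous coordinates $(1,x,y,z)$. For $Q=(1,q_1,q_2,q_3)$ the translation $\mathbf{T}_Q$ acts on row vectors from the right by the matrix $\begin{pmatrix}1&q_1&q_2&q_3\\0&e^{-q_3}&0&0\\0&0&e^{q_3}&0\\0&0&0&1\end{pmatrix}$, mapping $E_0=(1,0,0,0)$ to $Q$. A translation curve from $E_0$ with unit initial tangent $(u,v,w)$ is $x(t)=-\frac uw(e^{-wt}-1)$, $y(t)=\frac vw(e^{wt}-1)$, $z(t)=wt$ (for $w\ne0$; $x=ut,y=vt,z=0$ if $w=0$); translation curves from $Q$ are their $\mathbf{T}_Q$-images, and the translation distance $d^t(Q,P)$ is the length of the translation curve segment from $Q$ to $P$. For a point $(1,x,y,z)$ with $z\ne0$, $\mathbf{t}(x,y,z):=\big(\frac{xz}{1-e^{-z}},\frac{yz}{e^z-1},z\big)$; this equals $d^t(E_0,(1,x,y,z))$ times the unit initial tangent vector at $E_0$ of the translation curve from $E_0$ to $(1,x,y,z)$. The translation-like triangular surface $S^{\mathbf{Sol},t}_{P_1,P_2,P_3}$ is the set of points $P$ such that the tangent vectors at $P$ of the translation curves from $P$ to $P_1,P_2,P_3$ are coplanar; equivalently (pulling back by $\mathbf{T}_P^{-1}$) such that the vectors $\mathbf{t}(P^1),\mathbf{t}(P^2),\mathbf{t}(P^3)$ are linearly dependent. *)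

From HB Require Import structures.
From mathcomp Require Import all_boot all_order all_algebra.
From mathcomp Require Import all_classical all_reals all_analysis.
Set Implicit Arguments. Unset Strict Implicit. Unset Printing Implicit Defensive.
Import Order.TTheory GRing.Theory Num.Theory.
Local Open Scope ring_scope.

(* A point (1,x,y,z) of Sol is represented by its affine coordinates (x,y,z). *)
Definition solpt (R : realType) := (R * R * R)%type.
Definition solpt_of (R : realType) (x y z : R) : solpt R := (x, y, z).

(* The translation T_Q (row vector acting from the right by the matrix in the
   context): (1,u,v,w) |-> (1, q1 + u e^{-q3}, q2 + v e^{q3}, q3 + w). *)
Definition sol_translate (R : realType) (Q P : solpt R) : solpt R :=
  let: (q1, q2, q3) := Q in let: (u, v, w) := P in
  (q1 + u * expR (- q3), q2 + v * expR q3, q3 + w).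

Definition sol_translate_inv (R : realType) (Q P : solpt R) : solpt R :=
  let: (q1, q2, q3) := Q in let: (u, v, w) := P in
  ((u - q1) * expR q3, (v - q2) * expR (- q3), w - q3).

(* t(x,y,z) = (x z/(1-e^{-z}), y z/(e^z-1), z), meaningful for z <> 0. *)
Definition tvec (R : realType) (P : solpt R) : 'rV[R]_3 :=
  let: (x, y, z) := P in
  \row_(j < 3) [:: x * z / (1 - expR (- z)); y * z / (expR z - 1); z]`_j.

Definition lin_dep3 (R : realType) (u v w : 'rV[R]_3) : Prop :=
  exists l1 l2 l3 : R, [\/ l1 != 0, l2 != 0 | l3 != 0] /\
    l1 *: u + l2 *: v + l3 *: w = 0.

(* Translation-like triangular surface, via the pulled-back characterization of
   the context: P is on the surface iff t(T_P^{-1} P1), t(T_P^{-1} P2),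
   t(T_P^{-1} P3) are linearly dependent. *)
Definition sol_tl_surface (R : realType) (P1 P2 P3 : solpt R) : solpt R -> Prop :=
  fun P => lin_dep3 (tvec (sol_translate_inv P P1)) (tvec (sol_translate_inv P P2))
                    (tvec (sol_translate_inv P P3)).

Definition triple_prod (R : realType) (u v w : 'rV[R]_3) : R :=
  \det (\matrix_(i < 3, j < 3) [:: u 0 j; v 0 j; w 0 j]`_i).

From HB Require Import structures.
From mathcomp Require Import all_boot all_order all_algebra.
From mathcomp Require Import all_classical all_reals all_analysis.
From mathcomp Require Import ring.
Import Order.TTheory GRing.Theory Num.Theory.
Local Open Scope ring_scope.

(* Since t(u, v, w) = w / (e^w - 1) * (u e^w, v, e^w - 1), each pulled-back
   vector t(T_P^{-1}(p, q, r)) is the scalar (r - z) / (e^r - e^z) times the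
   vector ((p - x) e^r e^z, q - y, e^r - e^z).  The triple product is then the
   product of the three scalars times a determinant that is polynomial in the
   coordinates and their exponentials, and expanding it yields the formula.
   Three vectors of R^3 are linearly dependent iff their determinant vanishes,
   which turns the formula into the equation of the surface. *)

Section SolTriangularSurface.
Context {R : realType}.
Implicit Types (u v w : 'rV[R]_3).

Definition row3 (a b c : R) : 'rV[R]_3 := \row_(k < 3) [:: a; b; c]`_k.

Definition mx_rows3 u v w : 'M[R]_3 :=
  \matrix_(i < 3, j < 3) [:: u 0 j; v 0 j; w 0 j]`_i.

Lemma row3_eta u : u = row3 (u 0 0) (u 0 1) (u 0 2).
Proof.
by apply/rowP => -[[|[|[|k]]] lt_k3]; rewrite mxE //=; congr (u 0 _); apply: val_inj.
Qed.

Lemma row3_eq0 (a b c : R) : (row3 a b c == 0) = [&& a == 0, b == 0 & c == 0].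
Proof.
apply/eqP/and3P => [/rowP row0 | [/eqP-> /eqP-> /eqP->]].
  by move: (row0 0) (row0 1) (row0 2); rewrite !mxE /= => -> -> ->.
by apply/rowP => -[[|[|[|k]]] lt_k3]; rewrite !mxE.
Qed.

Lemma mul_row3_mx_rows3 (a b c : R) u v w :
  row3 a b c *m mx_rows3 u v w = a *: u + b *: v + c *: w.
Proof.
by apply/rowP => j; rewrite !mxE !big_ord_recl big_ord0 !mxE /= addr0 addrA.
Qed.

Lemma lin_dep3P u v w : lin_dep3 u v w <-> triple_prod u v w = 0.
Proof.
split=> [[a [b [c [nz dep]]]] | /eqP/det0P[l nz dep]].
  apply/eqP/det0P; exists (row3 a b c); last by rewrite mul_row3_mx_rows3.
  by rewrite row3_eq0 !negb_and; apply/or3P.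
exists (l 0 0), (l 0 1), (l 0 2); split.
  by apply/or3P; rewrite -!negb_and -row3_eq0 -row3_eta.
by rewrite -mul_row3_mx_rows3 -row3_eta.
Qed.

Lemma triple_prod_row3 (a1 b1 c1 a2 b2 c2 a3 b3 c3 : R) :
  triple_prod (row3 a1 b1 c1) (row3 a2 b2 c2) (row3 a3 b3 c3) =
  a1 * (b2 * c3 - c2 * b3) - b1 * (a2 * c3 - c2 * a3) + c1 * (a2 * b3 - b2 * a3).
Proof.
rewrite /triple_prod (expand_det_row _ 0) !big_ord_recl big_ord0 /cofactor.
by rewrite !(expand_det_row _ 0) !big_ord_recl !big_ord0 /cofactor !det_mx11 !mxE /=; ring.
Qed.

Lemma triple_prodE u v w : triple_prod u v w =
  u 0 0 * (v 0 1 * w 0 2 - v 0 2 * w 0 1) - u 0 1 * (v 0 0 * w 0 2 - v 0 2 * w 0 0)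
  + u 0 2 * (v 0 0 * w 0 1 - v 0 1 * w 0 0).
Proof. by rewrite {1}(row3_eta u) {1}(row3_eta v) {1}(row3_eta w) triple_prod_row3. Qed.

Lemma triple_prodZ (a b c : R) u v w :
  triple_prod (a *: u) (b *: v) (c *: w) = a * b * c * triple_prod u v w.
Proof. by rewrite !triple_prodE !mxE; ring. Qed.

Lemma expR_sub_neq0 (r s : R) : r != s -> expR r - expR s != 0.
Proof. by rewrite subr_eq0; apply: contra => /eqP/expR_inj->. Qed.

Lemma tvec_translate_inv (x y z p q r : R) : z != r ->
  tvec (sol_translate_inv (solpt_of x y z) (solpt_of p q r)) =
  ((r - z) / (expR r - expR z)) *: row3 ((p - x) * expR r * expR z) (q - y) (expR r - expR z).
Proof.
move=> neq_zr; apply/rowP => -[[|[|[|k]]] lt_k3]; rewrite !mxE //= ?(expRN, expRB).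
all: by field; rewrite ?expR_sub_neq0 ?expR_eq0 // eq_sym.
Qed.

End SolTriangularSurface.

Theorem lemma4p2 (R : realType) (a b c d e f x y z : R) :
  z != 0 -> z != c -> z != f ->
  let P1 := solpt_of 0 0 0 in
  let P2 := solpt_of a b c in
  let P3 := solpt_of d e f in
  let P := solpt_of x y z in
  let Pi1 := sol_translate_inv P P1 in
  let Pi2 := sol_translate_inv P P2 in
  let Pi3 := sol_translate_inv P P3 in
  let rhs := z * (z - c) * (z - f)
        / ((1 - expR (- z)) * (expR z - expR c) * (expR z - expR f))
        * ((expR z - 1) * (b * d * expR f - a * e * expR c)
           + (expR f - 1) * (a * y * expR c - b * x * expR z)
           + (expR c - 1) * (e * x * expR z - d * y * expR f)) in
  [/\ Pi1 = solpt_of (- x * expR z) (- y * expR (- z)) (- z),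
      Pi2 = solpt_of ((a - x) * expR z) ((b - y) * expR (- z)) (c - z),
      Pi3 = solpt_of ((d - x) * expR z) ((e - y) * expR (- z)) (f - z),
      triple_prod (tvec Pi1) (tvec Pi2) (tvec Pi3) = rhs &
      (sol_tl_surface P1 P2 P3 P <-> rhs = 0)].
Proof.
move=> nz_z neq_zc neq_zf P1 P2 P3 P Pi1 Pi2 Pi3 rhs.
have triple_prod_rhs : triple_prod (tvec Pi1) (tvec Pi2) (tvec Pi3) = rhs.
  rewrite !tvec_translate_inv // triple_prodZ triple_prod_row3 /rhs expR0 expRN.
  by field; rewrite -expR0 !expR_sub_neq0 ?expR_eq0 // eq_sym.
split=> //; first by rewrite /Pi1 /= !sub0r mulNr.
by rewrite /sol_tl_surface lin_dep3P triple_prod_rhs.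
Qed.
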